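(* Let $n\ge 3$ and consider the game with players $N=\{1,\dots,n\}$, strategy sets $[0,1]$ and payoffs $\pi_i(x)=x_i(1-X_N)$, $X_N=\sum_{j\in N}x_j$. Let $C\subset N$ be a coalition of cooperators with $|C|=m$, $1\le m\le n-1$, acting as a Stackelberg leader (PCLE as defined below). Then: (i) for any $x^C$ with $X_C=\sum_{i\in C}x_i<1$, the non-cooperators' game has the unique Nash equilibrium $x_j=\frac{1-X_C}{n-m+1}$ for all $j\in N\setminus C$; (ii) in every PCLE, $X_C=\tfrac12$ and each non-cooperator extracts $\frac{1}{2(n-m+1)}$, so $X_N=1-\frac{1}{2(n-m+1)}$; if cooperators split equally, each cooperator extracts $\frac{1}{2m}$ and the payoffs are $\pi^L_C(m)=\frac{1}{4m(n-m+1)}$ for cooperators and $\pi^L_{NC}(m)=\frac{1}{4(n-m+1)^2}$ for non-cooperators. (iii) Defining, via these formulas (with $\pi^L_C(n)=\tfrac{1}{4n}$ the symmetric socially optimal payoff), a coalition size $m\in\{2,\dots,n-1\}$ to be stable if $\pi^L_{NC}(m)\ge\pi^L_C(m+1)$ and $\pi^L_C(m)\ge\pi^L_{NC}(m-1)$, the size $m$ is stable if and only if $$\frac{m+1}{n-m+1}\ge\frac{n-m+1}{n-m}\qquad\text{and}\qquad\frac{n-m+2}{n-m+1}\ge\frac{m}{n-m+2}.$$ In particular, for $n=8$ the coalition size $m=5$ is stable.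
   Context: For a coalition $C\subset N$ of cooperators, given a joint choice $x^C\in[0,1]^C$, let $\mathrm{NE}(x^C)$ be the set of Nash equilibria of the game among $N\setminus C$ with payoffs $x^{N\setminus C}\mapsto\pi_j(x^{N\setminus C},x^C)$. Let $\tilde\pi(x^C)=\min_{x^{N\setminus C}\in\mathrm{NE}(x^C)}\sum_{i\in C}\pi_i(x^{N\setminus C},x^C)$. A partial cooperative leadership equilibrium (PCLE) is a profile $(x^{N\setminus C}_*,x^C_* )$ with $x^C_*$ maximizing $\tilde\pi$ over $[0,1]^C$ and $x^{N\setminus C}_*$ minimizing $\sum_{i\in C}\pi_i(\cdot,x^C_* )$ over $\mathrm{NE}(x^C_* )$. *)

From HB Require Import structures.
From mathcomp Require Import all_boot all_order all_algebra.
From mathcomp Require Import reals.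
Set Implicit Arguments. Unset Strict Implicit. Unset Printing Implicit Defensive.
Import Order.TTheory GRing.Theory Num.Theory.
Local Open Scope ring_scope.

Section Game.
Variables (R : realType) (n : nat).

Definition profile := 'I_n -> R.

Definition payoff (x : profile) (i : 'I_n) : R := x i * (1 - \sum_(j < n) x j).

Definition upd (x : profile) (j : 'I_n) (t : R) : profile :=
  fun k => if k == j then t else x k.

Definition isNE (C : {set 'I_n}) (xC y : profile) : Prop :=
  (forall i, i \in C -> y i = xC i) /\
  (forall j, j \notin C ->
     (0 <= y j <= 1) /\ forall t, 0 <= t <= 1 -> payoff (upd y j t) j <= payoff y j).

Definition coalPay (C : {set 'I_n}) (y : profile) : R := \sum_(i in C) payoff y i.

(* v = tilde pi(xC) = min over NE(xC) of the coalition payoff (attained). *)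
Definition tildeIs (C : {set 'I_n}) (xC : profile) (v : R) : Prop :=
  (exists y, isNE C xC y /\ coalPay C y = v) /\
  (forall y, isNE C xC y -> v <= coalPay C y).

Definition onUnitC (C : {set 'I_n}) (x : profile) : Prop :=
  forall i, i \in C -> 0 <= x i <= 1.

Definition isPCLE (C : {set 'I_n}) (x : profile) : Prop :=
  onUnitC C x /\ isNE C x x /\
  exists v, tildeIs C x v /\ coalPay C x = v /\
    (forall xC, onUnitC C xC -> forall w, tildeIs C xC w -> w <= v).

End Game.

Definition piLC (R : realType) (n m : nat) : R :=
  1 / (4 * m%:R * (n - m + 1)%:R).
Definition piLNC (R : realType) (n m : nat) : R :=
  1 / (4 * ((n - m + 1)%:R) ^+ 2).

Definition stable (R : realType) (n m : nat) : Prop :=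
  (2 <= m <= n.-1)%N /\
  piLC R n m.+1 <= piLNC R n m /\ piLNC R n m.-1 <= piLC R n m.

From HB Require Import structures.
From mathcomp Require Import all_boot all_order all_algebra.
From mathcomp Require Import reals.
From mathcomp Require Import ring lra zify.
Import Order.TTheory GRing.Theory Num.Theory.
Local Open Scope ring_scope.

(* Write X = X_C for the coalition's total extraction, k = n - m
   for the number of non-cooperators and S = X_N for the total extraction.
   (i) Player j's payoff t (1 - (s + t)), with s = S - x_j, is a concave
   quadratic in t; its maximiser on [0,1] is (1 - s)/2 when s < 1 and 0 when
   s >= 1.  In an equilibrium every non-cooperator thus extracts 1 - S, or
   extracts 0 while S >= 1; the second case forces S = X < 1, absurd, so all
   followers extract c = 1 - S, and S = X + k c gives c = (1 - X)/(k + 1).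
   Conversely this profile is an equilibrium, by completing the square.
   (ii) Hence the coalition's value of a choice with X < 1 is
   X c = X (1 - X)/(k + 1), maximised exactly at X = 1/2; a PCLE has X < 1 (otherwise its value is <= 0,
   while X = 1/2 is achievable and yields a positive value), so X = 1/2, and
   the remaining formulas follow by arithmetic.
   (iii) The stability conditions are inequalities between positive fractions,
   which become polynomial inequalities after cross-multiplication. *)

Set Implicit Arguments.

Lemma best_reply_interior (R : realFieldType) (s a : R) :
  0 <= s < 1 -> 0 <= a <= 1 ->
  (forall t, 0 <= t <= 1 -> t * (1 - (s + t)) <= a * (1 - (s + a))) ->
  a = (1 - s) / 2.
Proof.
move=> /andP[s0 s1] /andP[a0 a1] a_best.
have half01 : 0 <= (1 - s) / 2 <= 1 by apply/andP; split; lra.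
have := a_best _ half01; nra.
Qed.

Lemma best_reply_corner (R : realFieldType) (s a : R) :
  1 <= s -> 0 <= a -> 0 * (1 - (s + 0)) <= a * (1 - (s + a)) -> a = 0.
Proof. nra. Qed.

Lemma ler_frac (R : realFieldType) (a b c d : R) : 0 < b -> 0 < d ->
  (a / b <= c / d) = (a * d <= c * b).
Proof. by move=> b0 d0; rewrite ler_pdivrMr // mulrAC ler_pdivlMr. Qed.

Lemma follower_total (R : realFieldType) (k : nat) (X : R) :
  X + k%:R * ((1 - X) / (k + 1)%:R) = 1 - (1 - X) / (k + 1)%:R.
Proof. by field; rewrite natr1 pnatr_eq0. Qed.

Section Game.
Variables (R : realType) (n : nat).
Implicit Types (C : {set 'I_n}) (x y xC : profile R n).

Lemma sum_coalition_split y C :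
  \sum_(j < n) y j = \sum_(i in C) y i + \sum_(j in ~: C) y j.
Proof.
rewrite (bigID (mem C)) /=; congr (_ + _).
by apply: eq_bigl => j; rewrite in_setC.
Qed.

Lemma card_followers C : #|~: C| = (n - #|C|)%N.
Proof. by rewrite cardsCs card_ord setCK. Qed.

Lemma payoff_upd y j t :
  payoff (upd y j t) j = t * (1 - ((\sum_(k < n) y k - y j) + t)).
Proof.
rewrite /payoff /upd eqxx (bigD1 j) //= eqxx [in RHS](bigD1 j) //=.
rewrite [y j + _]addrC addrK [_ + t]addrC.
by congr (_ * (1 - (_ + _))); apply: eq_bigr => i /negbTE ->.
Qed.

Lemma payoffE y j :
  payoff y j = y j * (1 - ((\sum_(k < n) y k - y j) + y j)).
Proof. by rewrite /payoff subrK. Qed.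

Lemma coalPayE C y :
  coalPay C y = (\sum_(i in C) y i) * (1 - \sum_(j < n) y j).
Proof. by rewrite /coalPay /payoff big_distrl. Qed.

Lemma NE_coalition_sum C xC y :
  isNE C xC y -> \sum_(i in C) y i = \sum_(i in C) xC i.
Proof. by case=> onC _; apply: eq_bigr => i /onC. Qed.

Lemma NE_ge0 C xC y : onUnitC C xC -> isNE C xC y -> forall k, 0 <= y k.
Proof.
move=> xC01 [onC offC] k; have [kC | kNC] := boolP (k \in C).
  by rewrite onC //; case/andP: (xC01 k kC).
by case: (offC k kNC) => /andP[].
Qed.

Lemma NE_follower C xC y j : onUnitC C xC -> isNE C xC y -> j \notin C ->
  y j = 1 - \sum_(k < n) y k \/ (y j = 0 /\ 1 <= \sum_(k < n) y k).
Proof.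
move=> xC01 yNE jNC; have [yj01 yj_best] := yNE.2 j jNC.
set S := \sum_(k < n) y k.
have others_ge0 : 0 <= S - y j.
  rewrite /S (bigD1 j) //= addrAC subrr add0r.
  by apply: sumr_ge0 => k _; exact: (NE_ge0 xC01 yNE).
have best t : 0 <= t <= 1 ->
    t * (1 - ((S - y j) + t)) <= y j * (1 - ((S - y j) + y j)).
  by move=> t01; rewrite -payoff_upd -payoffE; apply: yj_best.
have [others_lt1 | others_ge1] := ltrP (S - y j) 1.
  left; have := @best_reply_interior _ (S - y j) _ _ yj01 best.
  by rewrite others_ge0 others_lt1 => /(_ isT); lra.
right; have yj0 : y j = 0.
  apply: (@best_reply_corner _ (S - y j) _ others_ge1); first by case/andP: yj01.
  by apply: best; rewrite lexx ler01.
by split=> //; lra.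
Qed.

Definition followerShare C xC : R :=
  (1 - \sum_(i in C) xC i) / (n - #|C| + 1)%:R.

Definition neProfile C xC : profile R n :=
  fun i => if i \in C then xC i else followerShare C xC.

Lemma total_of_NE_form C xC y :
  (forall i, i \in C -> y i = xC i) ->
  (forall j, j \notin C -> y j = followerShare C xC) ->
  \sum_(j < n) y j = 1 - followerShare C xC.
Proof.
move=> onC offC; rewrite (sum_coalition_split y C) (eq_bigr xC onC).
rewrite [X in _ + X](eq_bigr (fun=> followerShare C xC)); last first.
  by move=> j; rewrite in_setC => /offC.
by rewrite sumr_const card_followers -mulr_natl follower_total.
Qed.

Lemma NE_unique C xC y :
  onUnitC C xC -> \sum_(i in C) xC i < 1 -> isNE C xC y ->
  forall j, j \notin C -> y j = followerShare C xC.
Proof.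
move=> xC01 X_lt1 yNE.
set S := \sum_(k < n) y k; set X := \sum_(i in C) xC i in X_lt1.
have S_split : S = X + \sum_(j in ~: C) y j.
  by rewrite /S (sum_coalition_split y C) (NE_coalition_sum yNE).
have [S_lt1 | S_ge1] := ltrP S 1; last first.
  have followers0 : \sum_(j in ~: C) y j = 0.
    apply: big1 => j; rewrite in_setC => jNC.
    have := NE_ge0 xC01 yNE j.
    by case: (NE_follower j xC01 yNE jNC) => [|[]//]; rewrite -/S; lra.
  lra.
have followers j : j \notin C -> y j = 1 - S.
  by move=> jNC; case: (NE_follower j xC01 yNE jNC) => [|[_]]; rewrite -/S //; lra.
have S_eq : S = X + (n - #|C|)%:R * (1 - S).
  rewrite {1}S_split [F in _ + F](eq_bigr (fun=> 1 - S)); last first.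
    by move=> j; rewrite in_setC => /followers.
  by rewrite sumr_const card_followers mulr_natl.
have k1_neq0 : (n - #|C| + 1)%:R != 0 :> R by rewrite pnatr_eq0 addn1.
move=> j /followers ->; rewrite /followerShare -/X -[1 - S](mulfK k1_neq0).
by congr (_ / _); rewrite natrD; lra.
Qed.

Lemma NE_of_form C xC y :
  onUnitC C xC -> \sum_(i in C) xC i < 1 ->
  (forall i, i \in C -> y i = xC i) ->
  (forall j, j \notin C -> y j = followerShare C xC) ->
  isNE C xC y.
Proof.
move=> xC01 X_lt1 onC offC.
have X_ge0 : 0 <= \sum_(i in C) xC i by apply: sumr_ge0 => i /xC01 /andP[].
have k1_gt0 : 0 < (n - #|C| + 1)%:R :> R by rewrite ltr0n addn1.
have c_gt0 : 0 < followerShare C xC by rewrite divr_gt0 // subr_gt0.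
have c_le1 : followerShare C xC <= 1.
  by rewrite ler_pdivrMr // mul1r natrD; have := ler0n R (n - #|C|); lra.
split=> // j jNC; rewrite offC //; split; first by apply/andP; split; lra.
move=> t t01; rewrite payoff_upd payoffE (total_of_NE_form _ _ onC offC) offC //.
set c := followerShare C xC.
have -> : t * (1 - (1 - c - c + t)) = c * c - (t - c) ^+ 2 by ring.
have -> : c * (1 - (1 - c - c + c)) = c * c by ring.
by rewrite lerBlDr lerDl sqr_ge0.
Qed.

Lemma neProfile_NE C xC :
  onUnitC C xC -> \sum_(i in C) xC i < 1 -> isNE C xC (neProfile C xC).
Proof.
move=> xC01 X_lt1; apply: NE_of_form => // [i iC | j jNC].
  by rewrite /neProfile iC.
by rewrite /neProfile (negbTE jNC).
Qed.

Lemma coalPay_NE C xC y :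
  onUnitC C xC -> \sum_(i in C) xC i < 1 -> isNE C xC y ->
  coalPay C y = (\sum_(i in C) xC i) * followerShare C xC.
Proof.
move=> xC01 X_lt1 yNE.
rewrite coalPayE (NE_coalition_sum yNE) (total_of_NE_form _ _ yNE.1) ?subKr //.
exact: NE_unique xC01 X_lt1 yNE.
Qed.

Lemma tilde_value C xC :
  onUnitC C xC -> \sum_(i in C) xC i < 1 ->
  tildeIs C xC ((\sum_(i in C) xC i) * followerShare C xC).
Proof.
move=> xC01 X_lt1; split.
  exists (neProfile C xC); split; first exact: neProfile_NE.
  exact/coalPay_NE/neProfile_NE.
by move=> y yNE; rewrite (coalPay_NE xC01 X_lt1 yNE).
Qed.

Lemma half_choice C : (0 < #|C|)%N ->
  exists xC, onUnitC C xC /\ \sum_(i in C) xC i = 1 / 2.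
Proof.
move=> m_gt0; have m_ge1 : 1 <= #|C|%:R :> R by rewrite ler1n.
exists (fun _ => 1 / (2 * #|C|%:R)); split.
  move=> i _; apply/andP; split; first by rewrite divr_ge0 //; lra.
  by rewrite ler_pdivrMr; lra.
by rewrite sumr_const -mulr_natr; field; lra.
Qed.

Lemma PCLE_coalition_half C x : (0 < #|C|)%N -> isPCLE C x ->
  \sum_(i in C) x i = 1 / 2.
Proof.
move=> m_gt0 [x01 [xNE [v [_ [v_eq v_max]]]]].
have k1_gt0 : 0 < (n - #|C| + 1)%:R :> R by rewrite ltr0n addn1.
have [xh [xh01 xh_half]] := half_choice C m_gt0.
have xh_lt1 : \sum_(i in C) xh i < 1 by rewrite xh_half; lra.
have := v_max xh xh01 _ (tilde_value xh01 xh_lt1).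
rewrite /followerShare xh_half -v_eq; set X := \sum_(i in C) x i => v_ge.
have X_ge0 : 0 <= X by apply: sumr_ge0 => i /x01 /andP[].
have X_lt1 : X < 1.
  rewrite ltNge; apply/negP => X_ge1.
  have S_ge1 : 1 <= \sum_(j < n) x j.
    rewrite (sum_coalition_split x C) -/X -[1]addr0 lerD //.
    by apply: sumr_ge0 => j _; exact: (NE_ge0 x01 xNE).
  move: v_ge; rewrite coalPayE -/X => v_ge.
  have : X * (1 - \sum_(j < n) x j) <= 0 by rewrite mulr_ge0_le0 // subr_le0.
  have : 0 < (1 - 1 / 2) / (n - #|C| + 1)%:R :> R by rewrite divr_gt0 //; lra.
  lra.
move: v_ge; rewrite (coalPay_NE x01 X_lt1 xNE) /followerShare -/X !mulrA.
rewrite ler_pM2r ?invr_gt0 // => X_opt.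
have := sqr_ge0 (X - 1 / 2); nra.
Qed.

Lemma PCLE_follower C x : (0 < #|C|)%N -> isPCLE C x ->
  forall j, j \notin C -> x j = 1 / (2 * (n - #|C| + 1)%:R).
Proof.
move=> m_gt0 xPCLE; have [x01 [xNE _]] := xPCLE.
have X_half := PCLE_coalition_half m_gt0 xPCLE.
have X_lt1 : \sum_(i in C) x i < 1 by rewrite X_half; lra.
move=> j jNC; rewrite (NE_unique x01 X_lt1 xNE j jNC) /followerShare X_half.
by field; rewrite natr1 pnatr_eq0.
Qed.

Lemma PCLE_total C x : (0 < #|C|)%N -> isPCLE C x ->
  \sum_(j < n) x j = 1 - 1 / (2 * (n - #|C| + 1)%:R).
Proof.
move=> m_gt0 xPCLE; have [x01 [xNE _]] := xPCLE.
have X_half := PCLE_coalition_half m_gt0 xPCLE.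
have X_lt1 : \sum_(i in C) x i < 1 by rewrite X_half; lra.
rewrite (total_of_NE_form _ _ xNE.1 (NE_unique x01 X_lt1 xNE)).
by rewrite /followerShare X_half; congr (1 - _); field; rewrite natr1 pnatr_eq0.
Qed.

Lemma equal_split C x i : i \in C ->
  (forall i k, i \in C -> k \in C -> x i = x k) ->
  x i = (\sum_(k in C) x k) / #|C|%:R.
Proof.
move=> iC x_eq; rewrite (eq_bigr (fun=> x i)); last by move=> k kC; exact: x_eq.
rewrite sumr_const -[x i *+ _]mulr_natr mulfK // pnatr_eq0 -lt0n.
by apply/card_gt0P; exists i.
Qed.

Lemma PCLE_characterization C x : (0 < #|C|)%N -> isPCLE C x ->
  \sum_(i in C) x i = 1 / 2 /\
  (forall j, j \notin C -> x j = 1 / (2 * (n - #|C| + 1)%:R)) /\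
  \sum_(j < n) x j = 1 - 1 / (2 * (n - #|C| + 1)%:R) /\
  ((forall i k, i \in C -> k \in C -> x i = x k) ->
     (forall i, i \in C -> x i = 1 / (2 * #|C|%:R) /\
                           payoff x i = piLC R n #|C|) /\
     (forall j, j \notin C -> payoff x j = piLNC R n #|C|)).
Proof.
move=> m_gt0 xPCLE.
have X_half := PCLE_coalition_half m_gt0 xPCLE.
have total := PCLE_total m_gt0 xPCLE.
have follower := PCLE_follower m_gt0 xPCLE.
split=> //; split=> //; split=> // x_eq.
have m_neq0 : #|C|%:R != 0 :> R by rewrite pnatr_eq0 -lt0n.
have k1_neq0 : (n - #|C|)%:R + 1 != 0 :> R by rewrite natr1 pnatr_eq0.
split=> [i iC | j jNC]; rewrite /payoff total /piLC /piLNC natrD.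
  have xi : x i = 1 / (2 * #|C|%:R).
    by rewrite (equal_split _ iC x_eq) X_half; field.
  by rewrite xi; split=> //; field; rewrite k1_neq0 m_neq0.
by rewrite follower // natrD; field.
Qed.

End Game.

(* Part (iii): with k = n - m >= 1 followers, the two stability conditions
   piLC(m + 1) <= piLNC(m) and piLNC(m - 1) <= piLC(m) compare positive
   fractions; cross-multiplying both sides gives the same polynomial
   inequalities. *)
Lemma stable_iff (R : realType) (n m : nat) : (2 <= m <= n.-1)%N ->
  stable R n m <->
  ((n - m + 1)%:R / (n - m)%:R <= (m + 1)%:R / (n - m + 1)%:R :> R /\
   m%:R / (n - m + 2)%:R <= (n - m + 2)%:R / (n - m + 1)%:R :> R).
Proof.
move=> m_range; have /andP[m_ge2 m_le] := m_range.
rewrite /stable /piLC /piLNC.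
have -> : (n - m.+1 + 1 = n - m)%N by lia.
have -> : (n - m.-1 + 1 = n - m + 2)%N by lia.
rewrite !natrD -[m.+1%:R]natr1.
set k := (n - m)%:R : R; set M := m%:R : R.
have k_ge1 : 1 <= k by rewrite /k ler1n subn_gt0; lia.
have M_ge2 : 2 <= M by rewrite /M (ler_nat _ 2).
have pos (a : R) : 1 <= a -> 0 < a by lra.
rewrite !ler_frac ?mulr_gt0 ?exprn_gt0 ?pos //; try lra.
by rewrite !mul1r !expr2; split=> [[_ [? ?]] | [? ?]]; do ?split=> //; nra.
Qed.

(* For n = 8 the size m = 5 is stable: 1/72 <= 1/64 and 1/100 <= 1/80. *)
Lemma stable_8_5 (R : realType) : stable R 8 5.
Proof.
split=> //; rewrite /piLC /piLNC /=.
rewrite (_ : 8 - 6 + 1 = 3)%N // (_ : 8 - 5 + 1 = 4)%N // (_ : 8 - 4 + 1 = 5)%N //.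
by split; rewrite ler_frac; lra.
Qed.

Unset Implicit Arguments.

Theorem mainTheorem11 (R : realType) (n : nat) (hn : (3 <= n)%N) :
  (forall (C : {set 'I_n}), (1 <= #|C| <= n.-1)%N ->
    (* (i) *)
    (forall xC : profile R n, onUnitC C xC -> \sum_(i in C) xC i < 1 ->
       forall y : profile R n,
         isNE C xC y <->
         ((forall i, i \in C -> y i = xC i) /\
          (forall j, j \notin C ->
             y j = (1 - \sum_(i in C) xC i) / (n - #|C| + 1)%:R)))
    /\
    (* (ii) *)
    (forall x : profile R n, isPCLE C x ->
       \sum_(i in C) x i = 1 / 2 /\
       (forall j, j \notin C -> x j = 1 / (2 * (n - #|C| + 1)%:R)) /\
       \sum_(j < n) x j = 1 - 1 / (2 * (n - #|C| + 1)%:R) /\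
       ((forall i k, i \in C -> k \in C -> x i = x k) ->
          (forall i, i \in C -> x i = 1 / (2 * #|C|%:R) /\
                                payoff x i = piLC R n #|C|) /\
          (forall j, j \notin C -> payoff x j = piLNC R n #|C|))))
  /\
  (* (iii) *)
  (forall m : nat, (2 <= m <= n.-1)%N ->
     (stable R n m <->
      ((n - m + 1)%:R / (n - m)%:R <= (m + 1)%:R / (n - m + 1)%:R :> R /\
       m%:R / (n - m + 2)%:R <= (n - m + 2)%:R / (n - m + 1)%:R :> R)))
  /\ stable R 8 5.
Proof.
split; last by split; [exact: stable_iff | exact: stable_8_5].
move=> C /andP[m_gt0 _]; split; last by move=> x; apply: PCLE_characterization.
move=> xC xC01 X_lt1 y; split.
  by move=> yNE; split; [case: yNE | exact: NE_unique xC01 X_lt1 yNE].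
by case=> onC offC; apply: NE_of_form.
Qed.
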